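(* Let $A$ be an infinitesimal Hopf algebra with counit $\varepsilon$ and antipode $S$, and let $\mathrm{Prim}(A)=\{x\in A:\Delta(x)=x\otimes 1+1\otimes x\}$. Then $\mathrm{Ker}(\varepsilon)=\mathrm{Prim}(A)\oplus \mathrm{Ker}(\varepsilon)^2$, and the projection of $\mathrm{Ker}(\varepsilon)$ onto $\mathrm{Prim}(A)$ along $\mathrm{Ker}(\varepsilon)^2$ in this direct sum is (the restriction of) $-S$.
   Context: An infinitesimal bialgebra over a field $K$ is a $K$-vector space $A$ that is an associative unital algebra (product $m$, unit $1$) and a coassociative counital coalgebra (coproduct $\Delta$, counit $\varepsilon$) such that for all $a,b\in A$: $\Delta(ab)=\Delta(a)(1\otimes b)+(a\otimes 1)\Delta(b)-a\otimes b$. On the space $\mathcal{L}(A)$ of linear endomorphisms of $A$, the convolution product is $f\star g=m\circ(f\otimes g)\circ\Delta$, with unit $\nu\circ\varepsilon$, where $\nu(\lambda)=\lambda 1$. $A$ is an infinitesimal Hopf algebra if $\mathrm{Id}_A$ has an inverse $S$ for $\star$; $S$ is called the antipode. $\mathrm{Ker}(\varepsilon)^2$ denotes the linear span of products $xy$ with $x,y\in\mathrm{Ker}(\varepsilon)$. *)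

From HB Require Import structures.
From mathcomp Require Import all_boot all_order all_algebra.
Set Implicit Arguments. Unset Strict Implicit. Unset Printing Implicit Defensive.
Import GRing.Theory.
Local Open Scope ring_scope.

(* Elements of A (x) A are represented by finite sums  \sum_i a_i (x) b_i,
   i.e. sequences of pairs; two such representatives denote the same tensor
   iff they agree under every bilinear map into every K-module
   (universal property of the tensor product).  Same for A (x) A (x) A. *)

Section Tensors.
Variables (K : fieldType) (A : algType K).

Definition tens2 := seq (A * A).
Definition tens3 := seq (A * A * A).

Definition bilinear_map (W : lmodType K) (phi : A -> A -> W) : Prop :=
  (forall (k : K) x y b, phi (k *: x + y) b = k *: phi x b + phi y b) /\
  (forall (k : K) a x y, phi a (k *: x + y) = k *: phi a x + phi a y).

Definition trilinear_map (W : lmodType K) (phi : A -> A -> A -> W) : Prop :=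
  (forall (k : K) x y b c, phi (k *: x + y) b c = k *: phi x b c + phi y b c) /\
  (forall (k : K) a x y c, phi a (k *: x + y) c = k *: phi a x c + phi a y c) /\
  (forall (k : K) a b x y, phi a b (k *: x + y) = k *: phi a b x + phi a b y).

Definition teq2 (t u : tens2) : Prop :=
  forall (W : lmodType K) (phi : A -> A -> W), bilinear_map phi ->
    \sum_(p <- t) phi p.1 p.2 = \sum_(p <- u) phi p.1 p.2.

Definition teq3 (t u : tens3) : Prop :=
  forall (W : lmodType K) (phi : A -> A -> A -> W), trilinear_map phi ->
    \sum_(p <- t) phi p.1.1 p.1.2 p.2 = \sum_(p <- u) phi p.1.1 p.1.2 p.2.

Record inf_bialgebra (Delta : A -> tens2) (eps : A -> K) : Prop := {
  eps_linear : forall (k : K) x y, eps (k *: x + y) = k * eps x + eps y;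
  Delta_linear : forall (k : K) x y,
    teq2 (Delta (k *: x + y))
         ([seq (k *: p.1, p.2) | p <- Delta x] ++ Delta y);
  Delta_coassoc : forall x,
    teq3 [seq (q.1, q.2, p.2) | p <- Delta x, q <- Delta p.1]
         [seq (p.1, q.1, q.2) | p <- Delta x, q <- Delta p.2];
  counit_l : forall x, \sum_(p <- Delta x) eps p.1 *: p.2 = x;
  counit_r : forall x, \sum_(p <- Delta x) eps p.2 *: p.1 = x;
  (* Delta(ab) = Delta(a)(1 (x) b) + (a (x) 1)Delta(b) - a (x) b *)
  Delta_inf : forall a b,
    teq2 (Delta (a * b))
         ([seq (p.1, p.2 * b) | p <- Delta a] ++
          [seq (a * p.1, p.2) | p <- Delta b] ++ [:: (- a, b)])
}.

Definition conv (Delta : A -> tens2) (f g : A -> A) : A -> A :=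
  fun x => \sum_(p <- Delta x) f p.1 * g p.2.

Definition conv_unit (eps : A -> K) : A -> A := fun x => eps x *: 1.

Definition linear_endo (f : A -> A) : Prop :=
  forall (k : K) x y, f (k *: x + y) = k *: f x + f y.

Definition is_antipode (Delta : A -> tens2) (eps : A -> K) (S : A -> A) : Prop :=
  linear_endo S /\
  (forall x, conv Delta S id x = conv_unit eps x) /\
  (forall x, conv Delta id S x = conv_unit eps x).

Definition prim (Delta : A -> tens2) (x : A) : Prop :=
  teq2 (Delta x) [:: (x, 1); (1, x)].

Definition ker_sq (eps : A -> K) (z : A) : Prop :=
  exists s : seq (K * A * A),
    (forall t, t \in s -> eps t.1.2 = 0 /\ eps t.2 = 0) /\
    z = \sum_(t <- s) t.1.1 *: (t.1.2 * t.2).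

End Tensors.

(* The counit is multiplicative, and for eps a = 0 the antipode satisfies
   S (a b) = eps b S a; so S vanishes on Ker(eps)^2, while S = -Id on
   primitive elements, whence Prim(A) and Ker(eps)^2 meet in 0.
   Applying Delta to the antipode identities and using coassociativity gives
   Delta (S x) = S x (x) 1 + 1 (x) S x - eps x 1 (x) 1, so -S x is primitive
   when eps x = 0; and then x + S x = - sum (x' - eps x' 1)(S x'' - eps x'' 1)
   lies in Ker(eps)^2. *)

From HB Require Import structures.
From mathcomp Require Import all_boot all_order all_algebra.
Local Open Scope ring_scope.
Import GRing.Theory.

Section Multilinear.
Variables (K : fieldType) (A : algType K).

Lemma bilinear_map_for {W : lmodType K} {phi : A -> A -> W} :
  bilinear_map phi -> bilinear_for *:%R *:%R phi.
Proof. by case=> phil phir; split=> [b k x y | a k x y]; [exact: phil | exact: phir]. Qed.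

Lemma bilinear_map_mul (g h : A -> A) :
  linear g -> linear h -> bilinear_map (fun u v => g u * h v).
Proof.
move=> g_lin h_lin; split=> k x y b /=.
  by rewrite g_lin mulrDl scalerAl.
by rewrite h_lin mulrDr scalerAr.
Qed.

Lemma bilinear_map_scale (W : lmodType K) (g : A -> K) (h : A -> W) :
  scalar g -> linear h -> bilinear_map (fun u v => g u *: h v).
Proof.
move=> g_lin h_lin; split=> k x y b /=.
  by rewrite g_lin scalerDl scalerA.
by rewrite h_lin scalerDr !scalerA mulrC.
Qed.

Variables (W : lmodType K) (phi : A -> A -> W) (f : A -> A -> A) (g : A -> A).
Hypotheses (phi_bil : bilinear_map phi) (f_bil : bilinear_map f) (g_lin : linear g).

HB.instance Definition _ :=
  bilinear_isBilinear.Build K A A W *:%R *:%R phi (bilinear_map_for phi_bil).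
HB.instance Definition _ :=
  bilinear_isBilinear.Build K A A A *:%R *:%R f (bilinear_map_for f_bil).
HB.instance Definition _ := GRing.isLinear.Build K A A _ g g_lin.

Lemma trilinear_map_compl : trilinear_map (fun u v w => phi (f u v) (g w)).
Proof.
split; [|split] => k x y *; first by rewrite !linearPl.
  by rewrite linearPr linearPl.
by rewrite linearP linearPr.
Qed.

Lemma trilinear_map_compr : trilinear_map (fun u v w => phi (g u) (f v w)).
Proof.
split; [|split] => k x y *; first by rewrite linearP linearPl.
  by rewrite linearPl linearPr.
by rewrite !linearPr.
Qed.

Lemma bilinear_map_mull (c : A) : bilinear_map (fun u v => phi (c * u) v).
Proof.
split=> k x y *; last by rewrite linearPr.
by rewrite mulrDr -scalerAr linearPl.
Qed.

End Multilinear.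

Arguments bilinear_map_for {K A W phi}.
Arguments bilinear_map_mul {K A g h}.
Arguments bilinear_map_scale {K A W g h}.
Arguments trilinear_map_compl {K A W phi f g}.
Arguments trilinear_map_compr {K A W phi f g}.
Arguments bilinear_map_mull {K A W phi}.

Lemma double_sub_eq (V : zmodType) (x y : V) : x = x + x - y -> x = y.
Proof. by move/eqP; rewrite eq_sym subr_eq (inj_eq (addrI x)) => /eqP. Qed.

Section InfinitesimalBialgebra.
Context {K : fieldType} {A : algType K} {Delta : A -> tens2 A} {eps : A -> K}.
Hypothesis HA : inf_bialgebra Delta eps.

HB.instance Definition _ := GRing.isLinear.Build K A K^o *%R eps (eps_linear HA).

(* Delta z read through the bilinear map phi: since A (x) A is encoded by its
   universal property, identities between tensors are proved after applying an
   arbitrary such phi. *)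
Definition Delta_at {W : lmodType K} (phi : A -> A -> W) (z : A) : W :=
  \sum_(p <- Delta z) phi p.1 p.2.

Lemma Delta_coassoc_at {W : lmodType K} {psi : A -> A -> A -> W} x :
    trilinear_map psi ->
  \sum_(p <- Delta x) \sum_(q <- Delta p.1) psi q.1 q.2 p.2 =
  \sum_(p <- Delta x) \sum_(q <- Delta p.2) psi p.1 q.1 q.2.
Proof. by move/(Delta_coassoc HA x); rewrite !big_allpairs_dep. Qed.

Section BilinearMap.
Context {W : lmodType K} {phi : A -> A -> W}.
Hypothesis phi_bil : bilinear_map phi.

HB.instance Definition _ :=
  bilinear_isBilinear.Build K A A W *:%R *:%R phi (bilinear_map_for phi_bil).

Lemma Delta_at_linear : linear (Delta_at phi).
Proof.
move=> k x y; rewrite /Delta_at (Delta_linear HA k x y phi_bil) big_cat big_map.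
by rewrite scaler_sumr; congr (_ + _); apply: eq_bigr => p _; rewrite linearZl_LR.
Qed.

HB.instance Definition _ :=
  GRing.isLinear.Build K A W *:%R (Delta_at phi) Delta_at_linear.

Lemma Delta_at_sum (I : Type) (r : seq I) (F : I -> A) :
  Delta_at phi (\sum_(i <- r) F i) = \sum_(i <- r) Delta_at phi (F i).
Proof. exact: linear_sum. Qed.

Lemma Delta_atZ k z : Delta_at phi (k *: z) = k *: Delta_at phi z.
Proof. exact: linearZ. Qed.

Lemma Delta_atN z : Delta_at phi (- z) = - Delta_at phi z.
Proof. exact: linearN. Qed.

Lemma Delta_at_mul a b : Delta_at phi (a * b) =
  \sum_(p <- Delta a) phi p.1 (p.2 * b) + \sum_(p <- Delta b) phi (a * p.1) p.2 - phi a b.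
Proof.
by rewrite /Delta_at (Delta_inf HA a b phi_bil) !big_cat !big_map big_seq1 /= linearNl addrA.
Qed.

Lemma Delta_at1 : Delta_at phi 1 = phi 1 1.
Proof.
have mul11 := Delta_at_mul 1 1; rewrite mulr1 in mul11.
apply: double_sub_eq; rewrite {1}mul11 /Delta_at.
by congr (_ + _ - _); apply: eq_bigr => p _; rewrite ?mulr1 ?mul1r.
Qed.

End BilinearMap.

Definition Delta_atl {W : lmodType K} (phi : A -> A -> W) (c z : A) : W :=
  \sum_(p <- Delta z) phi (c * p.1) p.2.

Lemma bilinear_map_Delta_atl {W : lmodType K} {phi : A -> A -> W} :
  bilinear_map phi -> bilinear_map (Delta_atl phi).
Proof.
move=> phi_bil; split=> k x y z; last exact: (Delta_at_linear (bilinear_map_mull phi_bil x)).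
rewrite /Delta_atl scaler_sumr -big_split; apply: eq_bigr => p _ /=.
by rewrite mulrDl -scalerAl phi_bil.1.
Qed.

Let id_linear : linear (@id A). Proof. by []. Qed.

Lemma Delta_at_eps z : Delta_at (W := K^o) (fun u v => eps u * eps v) z = eps z.
Proof.
rewrite -{2}(counit_l HA z) linear_sum.
by apply: eq_bigr => p _; rewrite linearZ.
Qed.

Let eps_bil : bilinear_map (W := K^o) (fun u v => eps u * eps v) :=
  bilinear_map_scale (W := K^o) (eps_linear HA) (eps_linear HA).

Lemma eps_mul a b : eps (a * b) = eps a * eps b.
Proof.
apply: double_sub_eq.
rewrite -{1}Delta_at_eps (Delta_at_mul eps_bil); congr (_ + _ - _).
  rewrite -{2}(counit_l HA a) mulr_suml linear_sum.
  by apply: eq_bigr => p _; rewrite -scalerAl linearZ.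
rewrite -{2}(counit_r HA b) mulr_sumr linear_sum.
by apply: eq_bigr => p _; rewrite -scalerAr linearZ /= mulrC.
Qed.

Lemma eps1 : eps 1 = 1.
Proof.
have := Delta_at1 (bilinear_map_scale (eps_linear HA) id_linear).
rewrite /Delta_at /= (counit_l HA) => /eqP; rewrite -subr_eq0 -{1}[1]scale1r -scalerBl.
by rewrite scaler_eq0 oner_eq0 orbF subr_eq0 => /eqP.
Qed.

Lemma prim_eps x : prim Delta x -> eps x = 0.
Proof.
move=> x_prim; have := Delta_at_eps x.
rewrite /Delta_at (x_prim _ _ eps_bil) !big_cons big_nil /= eps1 mulr1 mul1r addr0.
by move/eqP; rewrite -subr_eq0 addrK => /eqP.
Qed.

Lemma ker_sq_eps x : ker_sq eps x -> eps x = 0.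
Proof.
case=> s [s_ker ->]; rewrite linear_sum big1_seq // => t /andP [_ /s_ker [t1 t2]].
by rewrite linearZ /= eps_mul t1 mul0r mulr0.
Qed.

Section Antipode.
Context {S : A -> A}.
Hypothesis HS : is_antipode Delta eps S.

Let S_linear : linear S := HS.1.
HB.instance Definition _ := GRing.isLinear.Build K A A _ S S_linear.

Lemma antipode_convl x : \sum_(p <- Delta x) S p.1 * p.2 = eps x *: 1.
Proof. exact: HS.2.1. Qed.

Lemma antipode_convr x : \sum_(p <- Delta x) p.1 * S p.2 = eps x *: 1.
Proof. exact: HS.2.2. Qed.

Lemma eps_antipode x : eps (S x) = eps x.
Proof.
have := congr1 eps (antipode_convl x); rewrite linearZ /= eps1 mulr1 linear_sum => <-.
rewrite -{1}(counit_r HA x) !linear_sum.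
by apply: eq_bigr => p _; rewrite !linearZ /= eps_mul mulrC.
Qed.

Lemma antipode1 : S 1 = 1.
Proof.
have := Delta_at1 (bilinear_map_mul S_linear id_linear).
by rewrite /Delta_at /= antipode_convl eps1 scale1r mulr1 => <-.
Qed.

Lemma antipode_prim x : prim Delta x -> S x = - x.
Proof.
move=> x_prim; have := x_prim _ _ (bilinear_map_mul S_linear id_linear).
rewrite antipode_convl (prim_eps _ x_prim) scale0r !big_cons big_nil /=.
by rewrite antipode1 mulr1 mul1r addr0 => /eqP; rewrite eq_sym addr_eq0 => /eqP.
Qed.

Lemma antipode_convl_ker a c : eps a = 0 -> \sum_(q <- Delta c) S (a * q.1) * q.2 = S a * c.
Proof.
move=> a_ker; have := Delta_at_mul (bilinear_map_mul S_linear id_linear) a c.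
rewrite /Delta_at /= antipode_convl eps_mul a_ker mul0r scale0r.
under eq_bigr do rewrite mulrA.
rewrite -mulr_suml antipode_convl a_ker scale0r mul0r add0r.
by move/eqP; rewrite eq_sym subr_eq add0r => /eqP.
Qed.

Lemma antipode_mul_ker a b : eps a = 0 -> S (a * b) = eps b *: S a.
Proof.
move=> a_ker; have Sa_linear : linear (fun u => S (a * u)).
  by move=> k x y; rewrite mulrDr -scalerAr linearP.
have inner p : \sum_(q <- Delta p.1) S (a * q.1) * (q.2 * S p.2) = S a * p.1 * S p.2.
  by rewrite -(antipode_convl_ker _ _ a_ker) mulr_suml; apply: eq_bigr => q _; rewrite mulrA.
rewrite -{1}(counit_r HA b) mulr_sumr linear_sum.
rewrite (eq_bigr (fun p => \sum_(q <- Delta p.2) S (a * p.1) * (q.1 * S q.2))); last first.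
  by move=> p _; rewrite -mulr_sumr antipode_convr -!scalerAr mulr1 linearZ.
rewrite -(Delta_coassoc_at b (trilinear_map_compr (bilinear_map_mul id_linear id_linear)
  (bilinear_map_mul id_linear S_linear) Sa_linear)) /=.
under eq_bigr => p _ do rewrite inner -mulrA.
by rewrite -mulr_sumr antipode_convr -scalerAr mulr1.
Qed.

Lemma antipode_ker_sq x : ker_sq eps x -> S x = 0.
Proof.
case=> s [s_ker ->]; rewrite linear_sum big1_seq // => t /andP [_ /s_ker [t1 t2]].
by rewrite linearZ /= antipode_mul_ker // t2 scale0r scaler0.
Qed.

Lemma ker_sq_add_antipode x : eps x = 0 -> ker_sq eps (x + S x).
Proof.
move=> x_ker; pose c u := u - eps u *: 1.
have eps_c u : eps (c u) = 0 by rewrite linearB linearZ /= eps1 mulr1 subrr.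
exists [seq (-1, c p.1, c (S p.2)) | p <- Delta x]; split.
  by move=> t /mapP [p _ ->]; split; apply: eps_c.
rewrite big_map /=; under eq_bigr => p _ do
  rewrite scaleN1r /c eps_antipode mulrBl !mulrBr -!scalerAl -!scalerAr !mul1r mulr1.
rewrite sumrN !sumrB antipode_convr x_ker scale0r (counit_r HA).
have -> : \sum_(p <- Delta x) eps p.1 *: S p.2 = S x.
  by rewrite -{2}(counit_l HA x) linear_sum; apply: eq_bigr => p _; rewrite linearZ.
under eq_bigr do rewrite scalerA.
rewrite -scaler_suml; have := Delta_at_eps x; rewrite /Delta_at => ->.
by rewrite x_ker scale0r !subr0 sub0r opprB opprK addrC.
Qed.

Section AntipodeBilinear.
Context {W : lmodType K} {phi : A -> A -> W}.
Hypothesis phi_bil : bilinear_map phi.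

HB.instance Definition _ :=
  bilinear_isBilinear.Build K A A W *:%R *:%R phi (bilinear_map_for phi_bil).

Lemma Delta_atl_antipode y : \sum_(p <- Delta y) Delta_atl phi p.1 (S p.2) =
  eps y *: phi 1 1 - phi y 1 + \sum_(p <- Delta y) phi p.1 (S p.2).
Proof.
have := congr1 (Delta_at phi) (antipode_convr y).
rewrite (Delta_at_sum phi_bil) (Delta_atZ phi_bil) (Delta_at1 phi_bil).
under eq_bigr do rewrite (Delta_at_mul phi_bil).
rewrite sumrB big_split /=.
have -> : \sum_(p <- Delta y) \sum_(q <- Delta p.1) phi q.1 (q.2 * S p.2) = phi y 1.
  rewrite (Delta_coassoc_at y (trilinear_map_compr phi_bil
    (bilinear_map_mul id_linear S_linear) id_linear)) /=.
  rewrite -{2}(counit_r HA y) linear_sumlz; apply: eq_bigr => p _.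
  by rewrite -linear_sumr antipode_convr linearZr_LR linearZl_LR.
by move=> <-; rewrite addrAC subrK addrC addKr.
Qed.

Lemma Delta_atl_convl x z :
  \sum_(p <- Delta x) Delta_atl phi (S p.1 * p.2) z = eps x *: Delta_at phi z.
Proof.
rewrite /Delta_atl exchange_big scaler_sumr; apply: eq_bigr => q _ /=.
by rewrite -linear_sumlz -mulr_suml antipode_convl -scalerAl mul1r linearZl_LR.
Qed.

End AntipodeBilinear.

Section AntipodeCoproduct.
Context {W : lmodType K} {phi : A -> A -> W}.
Hypothesis phi_bil : bilinear_map phi.

HB.instance Definition _ :=
  bilinear_isBilinear.Build K A A W *:%R *:%R phi (bilinear_map_for phi_bil).

Let Sm_bil : bilinear_map (fun u v => S u * v) := bilinear_map_mul S_linear id_linear.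

Lemma Delta_at_antipode x :
  Delta_at phi (S x) = phi (S x) 1 + phi 1 (S x) - eps x *: phi 1 1.
Proof.
(* Delta (S x) = sum (S x11 x12 (x) 1) Delta (S x2); then coassociativity and
   [Delta_atl_antipode] for the bilinear maps phi (S x1 * _) _ *)
have -> : Delta_at phi (S x) =
    \sum_(p <- Delta x) \sum_(q <- Delta p.1) Delta_atl phi (S q.1 * q.2) (S p.2).
  rewrite -{1}(counit_l HA x) linear_sum (Delta_at_sum phi_bil); apply: eq_bigr => p _.
  by rewrite (Delta_atl_convl phi_bil) linearZ (Delta_atZ phi_bil).
rewrite (Delta_coassoc_at x (trilinear_map_compl
  (bilinear_map_Delta_atl phi_bil) Sm_bil S_linear)) /=.
under eq_bigr => p _.
  rewrite (eq_bigr (fun q => Delta_atl (fun u v => phi (S p.1 * u) v) q.1 (S q.2))).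
    rewrite (Delta_atl_antipode (bilinear_map_mull phi_bil (S p.1))) /= mulr1.
    over.
  by move=> q _; apply: eq_bigr => r _; rewrite mulrA.
rewrite big_split sumrB /=.
have -> : \sum_(p <- Delta x) eps p.2 *: phi (S p.1) 1 = phi (S x) 1.
  rewrite -{2}(counit_r HA x) linear_sum linear_sumlz.
  by apply: eq_bigr => p _; rewrite linearZ linearZl_LR.
rewrite -linear_sumlz antipode_convl linearZl_LR.
rewrite -(Delta_coassoc_at x (trilinear_map_compl phi_bil Sm_bil S_linear)) /=.
have -> : \sum_(p <- Delta x) \sum_(q <- Delta p.1) phi (S q.1 * q.2) (S p.2) = phi 1 (S x).
  rewrite -{2}(counit_l HA x) linear_sum linear_sumr; apply: eq_bigr => p _.
  by rewrite -linear_sumlz antipode_convl linearZ linearZl_LR linearZr_LR.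
by rewrite addrAC.
Qed.

Lemma Delta_at_opp_antipode x : eps x = 0 ->
  Delta_at phi (- S x) = phi (- S x) 1 + phi 1 (- S x).
Proof.
move=> x_ker; rewrite (Delta_atN phi_bil) Delta_at_antipode x_ker scale0r subr0.
by rewrite linearNl linearNr opprD.
Qed.

End AntipodeCoproduct.

Lemma prim_opp_antipode x : eps x = 0 -> prim Delta (- S x).
Proof.
move=> x_ker W phi phi_bil; rewrite !big_cons big_nil addr0.
exact: Delta_at_opp_antipode.
Qed.

End Antipode.

End InfinitesimalBialgebra.

Theorem corollary5 (K : fieldType) (A : algType K)
    (Delta : A -> tens2 A) (eps : A -> K) (S : A -> A) :
  inf_bialgebra Delta eps ->
  is_antipode Delta eps S ->
  (forall x, prim Delta x -> eps x = 0) /\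
  (forall x, ker_sq eps x -> eps x = 0) /\
  (forall x, prim Delta x -> ker_sq eps x -> x = 0) /\
  (forall x, eps x = 0 ->
     exists p q, prim Delta p /\ ker_sq eps q /\ x = p + q) /\
  (forall x, eps x = 0 -> prim Delta (- S x) /\ ker_sq eps (x - (- S x))).
Proof.
move=> HA HS.
have proj x : eps x = 0 -> prim Delta (- S x) /\ ker_sq eps (x - (- S x)).
  move=> x_ker; rewrite opprK.
  by split; [exact: (prim_opp_antipode HA HS) | exact: (ker_sq_add_antipode HA HS)].
split; first exact: (prim_eps HA).
split; first exact: (ker_sq_eps HA).
split.
  move=> x x_prim x_ker; apply/eqP; rewrite -oppr_eq0.
  by rewrite -(antipode_prim HA HS _ x_prim) (antipode_ker_sq HA HS _ x_ker).
split=> // x /proj [p_prim q_ker].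
by exists (- S x), (x - - S x); rewrite [RHS]addrC subrK.
Qed.
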